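(* Let $T$ be a semigroup with identity acting by continuous surjections on compact metrizable spaces $X$ and $Y$, giving dynamical systems $(X,\alpha,T)$ and $(Y,\beta,T)$, and suppose $(Y,\beta,T)$ is a factor of $(X,\alpha,T)$. If $E(X,T)$ is completely regular then $E(Y,T)$ is completely regular.
   Context: A factor map is a continuous surjection $\pi:X\to Y$ with $\pi\circ\alpha^t=\beta^t\circ\pi$ for all $t$; $(Y,\beta,T)$ is a factor if such a map exists. $E(X,T)$ is the closure of $\{\alpha^t:t\in T\}$ in $X^X$ (pointwise convergence, composition), similarly $E(Y,T)$. A semigroup is completely regular if each element $a$ admits $x$ with $a=axa$, $ax=xa$. *)

From HB Require Import structures.
From mathcomp Require Import all_boot all_order all_algebra.
From mathcomp Require Import all_classical all_reals all_analysis.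
Set Implicit Arguments. Unset Strict Implicit. Unset Printing Implicit Defensive.
Local Open Scope classical_set_scope.

Definition is_monoid (T : Type) (op : T -> T -> T) (e : T) : Prop :=
  (forall r s t, op r (op s t) = op (op r s) t) /\
  (forall t, op e t = t) /\ (forall t, op t e = t).

Definition is_cont_surj_action (T : Type) (op : T -> T -> T) (e : T)
  (X : topologicalType) (alpha : T -> X -> X) : Prop :=
  alpha e = id /\
  (forall s t, alpha (op s t) = alpha s \o alpha t) /\
  (forall t, continuous (alpha t)) /\
  (forall t, forall y : X, exists x : X, alpha t x = y).

Definition is_factor_map (T : Type) (X Y : topologicalType)
  (alpha : T -> X -> X) (beta : T -> Y -> Y) (pi : X -> Y) : Prop :=
  continuous pi /\ (forall y : Y, exists x : X, pi x = y) /\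
  (forall t, pi \o alpha t = beta t \o pi).

Definition enveloping (T : Type) (X : topologicalType) (alpha : T -> X -> X)
  : set {ptws X -> X} :=
  closure (range alpha : set {ptws X -> X}).

Definition completely_regular (X : Type) (S : set (X -> X)) : Prop :=
  forall a, S a -> exists x, S x /\ a = a \o x \o a /\ a \o x = x \o a.

From HB Require Import structures.
From mathcomp Require Import all_boot all_order all_algebra.
From mathcomp Require Import all_classical all_reals all_analysis.
Local Open Scope classical_set_scope.

(* Let G be the closure of {(alpha^t, beta^t) : t in T} in X^X * Y^Y. It is
   compact, so its projections are closed and are exactly E(X,T) and E(Y,T).
   Each (p, q) in G is a limit of pairs satisfying pi o p = q o pi, hence
   satisfies it too; as pi is onto, q is determined by p and the identities
   a = a x a and a x = x a witnessing complete regularity carry over from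
   E(X,T) to E(Y,T). *)

Lemma image_closure_compact (U V : topologicalType) (f : U -> V) (A : set U) :
  hausdorff_space V -> continuous f -> compact (closure A) ->
  f @` closure A = closure (f @` A).
Proof.
move=> hV fc cA; apply/seteqP; split.
- move=> _ [u Au <-] B /fc nB; have [w [Aw Bw]] := Au _ nB.
  by exists (f w); split => //; exists w.
- have : closed (f @` closure A).
    by apply: compact_closed => //; apply: continuous_compact cA;
       exact: continuous_subspaceT.
  by move=> /closure_id ->; apply/closureS/image_subset/subset_closure.
Qed.

Lemma eq_on_closure (U V : topologicalType) (f g : U -> V) (A : set U) :
  hausdorff_space V -> continuous f -> continuous g ->
  (forall u, A u -> f u = g u) -> forall u, closure A u -> f u = g u.
Proof.
move=> hV fc gc fg u Au; apply: hV => B C nB nC.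
have nBC : nbhs u (f @^-1` B `&` g @^-1` C).
  by apply: filterI; [exact: fc | exact: gc].
have [w [Aw [Bw Cw]]] := Au _ nBC.
by exists (f w); split => //; rewrite fg.
Qed.

Lemma eval_continuous (U V : topologicalType) (u : U) :
  continuous (fun f : {ptws U -> V} => f u).
Proof. exact: (@proj_continuous U (fun _ => V) u). Qed.

Lemma fst_continuous (U V : topologicalType) : continuous (@fst U V).
Proof. by move=> [u v]; exact: cvg_fst. Qed.

Lemma snd_continuous (U V : topologicalType) : continuous (@snd U V).
Proof. by move=> [u v]; exact: cvg_snd. Qed.

Lemma ptws_compact (U V : topologicalType) :
  compact [set: V] -> compact [set: {ptws U -> V}].
Proof.
move=> cV; have := @tychonoff U (fun _ => V) (fun _ => setT) (fun _ => cV).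
by congr compact; rewrite predeqE.
Qed.

Lemma ptws_hausdorff (U V : topologicalType) :
  hausdorff_space V -> hausdorff_space {ptws U -> V}.
Proof. by move=> hV; exact: (@hausdorff_product U (fun _ => V)). Qed.

Lemma closure_morph (X Y : topologicalType) (pi : X -> Y)
    (G : set ({ptws X -> X} * {ptws Y -> Y})) :
  hausdorff_space Y -> continuous pi ->
  (forall z, G z -> {morph pi : x / z.1 x >-> z.2 x}) ->
  forall z, closure G z -> {morph pi : x / z.1 x >-> z.2 x}.
Proof.
move=> hY pic Gmorph z Gz x; pose evalX (f : {ptws X -> X}) := f x.
pose evalY (f : {ptws Y -> Y}) := f (pi x).
apply: (@eq_on_closure _ _ (pi \o evalX \o fst) (evalY \o snd) _ _ _ _ _ _ Gz).
- exact: hY.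
- move=> w; apply: continuous_comp; first exact: fst_continuous.
  by apply: continuous_comp; [exact: eval_continuous | exact: pic].
- move=> w; apply: continuous_comp; first exact: snd_continuous.
  exact: eval_continuous.
- by move=> w Gw; exact: Gmorph w Gw x.
Qed.

Lemma completely_regular_factor (X Y : Type) (pi : X -> Y)
    (G : set ((X -> X) * (Y -> Y))) :
  (forall y, exists x, pi x = y) ->
  (forall z, G z -> {morph pi : x / z.1 x >-> z.2 x}) ->
  completely_regular (fst @` G) -> completely_regular (snd @` G).
Proof.
move=> pi_onto Gmorph crX _ [[a b] Gab <-].
have [_ [[[x c] Gxc <-] [axa ax]]] := crX a (ex_intro2 _ _ _ Gab erefl).
have eq_on_pi (f g : Y -> Y) : (forall u, f (pi u) = g (pi u)) -> f = g.
  by move=> fg; apply: funext => y; have [u <-] := pi_onto y; exact: fg.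
have [ma mc] := (Gmorph _ Gab, Gmorph _ Gxc); rewrite /= in ma mc.
exists c; split; first by exists (x, c).
split; apply: eq_on_pi => u /=; rewrite -!(ma, mc).
- by have /= <- := congr1 (fun f => f u) axa.
- by have /= -> := congr1 (fun f => f u) ax.
Qed.

Theorem corollary3p4 (R : realType) (T : Type) (op : T -> T -> T) (e : T)
  (X Y : metricType R) (alpha : T -> X -> X) (beta : T -> Y -> Y) :
  is_monoid op e ->
  compact [set: X] -> compact [set: Y] ->
  is_cont_surj_action op e alpha -> is_cont_surj_action op e beta ->
  (exists pi : X -> Y, is_factor_map alpha beta pi) ->
  completely_regular (enveloping alpha) ->
  completely_regular (enveloping beta).
Proof.
move=> _ cX cY _ _ [pi [pic [pi_onto pi_morph]]].
pose G : set ({ptws X -> X} * {ptws Y -> Y}) :=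
  closure (range (fun t =>
    ((alpha t : {ptws X -> X}), (beta t : {ptws Y -> Y})))).
have cG : compact G.
  apply: (subclosed_compact _ _ (subsetT G)); first exact: closed_closure.
  by rewrite -setXTT; apply: compact_setX; exact: ptws_compact.
have hX : hausdorff_space {ptws X -> X} by exact/ptws_hausdorff/metric_hausdorff.
have hY : hausdorff_space {ptws Y -> Y} by exact/ptws_hausdorff/metric_hausdorff.
have EX : fst @` G = enveloping alpha.
  by rewrite image_closure_compact ?image_comp //; exact: fst_continuous.
have EY : snd @` G = enveloping beta.
  by rewrite image_closure_compact ?image_comp //; exact: snd_continuous.
have Gmorph : forall z, G z -> {morph pi : x / z.1 x >-> z.2 x}.
  apply: closure_morph; [exact: metric_hausdorff | exact: pic |].
  by move=> _ [t _ <-] x; exact: (congr1 (fun f => f x) (pi_morph t)).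
rewrite -EX -EY; exact: (@completely_regular_factor X Y pi G pi_onto Gmorph).
Qed.
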